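(* Let $\phi:\mathbb{R}\to\mathbb{R}$ be differentiable, $f(z)=A\phi(Bz)$ with $A\in\mathbb{R}^{k_0\times k}$, $B\in\mathbb{R}^{k\times k_0}$, and $x\in\mathbb{R}^{k_0}$ with $\|x\|_2=1$. Run gradient descent on $\mathcal{L}(x,f)=\frac12\|x-f(x)\|_2^2$ from $A^{(0)}=x{a^{(0)}}^T$, $B^{(0)}=b^{(0)}x^T$ ($a^{(0)},b^{(0)}\in\mathbb{R}^k$). If the final weights $A^{(\infty)},B^{(\infty)}$ yield zero training error, then $A^{(\infty)}=xa^T$ and $B^{(\infty)}=bx^T$ for some $a,b\in\mathbb{R}^k$ with $a^T\phi(b)=1$.
   Context: $\phi$ is applied coordinatewise. Gradient descent updates $A\leftarrow A-\gamma\nabla_A\mathcal{L}$, $B\leftarrow B-\gamma\nabla_B\mathcal{L}$; $A^{(\infty)},B^{(\infty)}$ denote the weights at the end of training. *)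

From HB Require Import structures.
From mathcomp Require Import all_boot all_order all_algebra.
From mathcomp Require Import all_classical all_reals all_analysis.
Set Implicit Arguments. Unset Strict Implicit. Unset Printing Implicit Defensive.
Import Order.TTheory GRing.Theory Num.Theory.
Local Open Scope ring_scope.
Local Open Scope classical_set_scope.

Section Defs.
Variables (R : realType) (k0 k : nat) (phi : R -> R).

Definition phiv (z : 'cV[R]_k) : 'cV[R]_k := map_mx phi z.

Definition net (A : 'M[R]_(k0, k)) (B : 'M[R]_(k, k0)) (z : 'cV[R]_k0)
  : 'cV[R]_k0 := A *m phiv (B *m z).

Definition sqnorm n (v : 'cV[R]_n) : R := \sum_(i < n) (v i 0) ^+ 2.

Definition loss (x : 'cV[R]_k0) A B : R :=
  2^-1 * sqnorm (x - net A B x).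

Definition gradA x (A : 'M[R]_(k0, k)) B : 'M[R]_(k0, k) :=
  \matrix_(i, j) derive1 (fun t : R => loss x (A + t *: delta_mx i j) B) 0.

Definition gradB x (A : 'M[R]_(k0, k)) (B : 'M[R]_(k, k0)) : 'M[R]_(k, k0) :=
  \matrix_(i, j) derive1 (fun t : R => loss x A (B + t *: delta_mx i j)) 0.

Definition gd_traj x (gamma : R) (Ah : nat -> 'M[R]_(k0, k))
  (Bh : nat -> 'M[R]_(k, k0)) : Prop :=
  forall n, Ah n.+1 = Ah n - gamma *: gradA x (Ah n) (Bh n) /\
            Bh n.+1 = Bh n - gamma *: gradB x (Ah n) (Bh n).

Definition final_weights (Ah : nat -> 'M[R]_(k0, k)) (Bh : nat -> 'M[R]_(k, k0))
  Ainf Binf : Prop :=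
  (exists T, Ainf = Ah T /\ Binf = Bh T) \/
  ((forall i j, (fun n : nat => (Ah n i j : R^o)) @ \oo --> (Ainf i j : R^o)) /\
   (forall i j, (fun n : nat => (Bh n i j : R^o)) @ \oo --> (Binf i j : R^o))).
End Defs.

From HB Require Import structures.
From mathcomp Require Import all_boot all_order all_algebra.
From mathcomp Require Import all_classical all_reals all_analysis.
From mathcomp Require Import ring.
Set Implicit Arguments. Unset Strict Implicit. Unset Printing Implicit Defensive.
Import Order.TTheory GRing.Theory Num.Theory.
Local Open Scope ring_scope.
Local Open Scope classical_set_scope.

(* Let P := x x^T, the orthogonal projection onto the line of the unit vector
   x. The weights have the announced shape exactly when A = P A and B = B P,
   with a = A^T x and b = B x. Gradient descent preserves both equations,
   whatever the step size: dL/dB = -(phi'(Bx) .* A^T r) x^T always ends in x^T,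
   and dL/dA = -r phi(Bx)^T, where the residual r = x - A phi(Bx) lies in the
   range of P as soon as A does. Being closed conditions, the two equations
   pass to the limit of the iterates. Finally, for A = x a^T and B = b x^T the
   residual is (1 - a^T phi(b)) x, so zero loss forces a^T phi(b) = 1. *)

Lemma mul_delta_mxE (R : pzRingType) m n (i : 'I_m) (j : 'I_n) (v : 'cV[R]_n) l :
  (delta_mx i j *m v) l 0 = (l == i)%:R * v j 0.
Proof.
rewrite mxE (bigD1 j) //= big1 ?addr0; first by rewrite mxE eqxx andbT.
by move=> l' /negbTE l'j; rewrite mxE l'j andbF mul0r.
Qed.

Lemma sqnorm_trmx (R : realType) n (v : 'cV[R]_n) : sqnorm v = (v^T *m v) 0 0.
Proof. by rewrite /sqnorm mxE; apply: eq_bigr => i _; rewrite mxE expr2. Qed.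

Lemma sqnormZ (R : realType) n (c : R) (v : 'cV[R]_n) :
  sqnorm (c *: v) = c ^+ 2 * sqnorm v.
Proof. by rewrite /sqnorm mulr_sumr; apply: eq_bigr => i _; rewrite mxE exprMn. Qed.

Section derivatives.
Context {R : realType}.

Lemma derive1_half_sum_sqr {n} {u : 'I_n -> R -> R} {du : 'I_n -> R} :
  (forall m, is_derive (0 : R) 1 (u m) (du m)) ->
  derive1 (fun t => 2^-1 * \sum_m u m t ^+ 2) 0 = \sum_m u m 0 * du m.
Proof.
move=> u_du.
have -> : (fun t => 2^-1 * \sum_m u m t ^+ 2) = 2^-1 \*: \sum_m u m ^+ 2.
  by apply/funext => t /=; rewrite fct_sumE.
rewrite derive1E derive_val scaler_sumr; apply: eq_bigr => m _.
by rewrite /GRing.scale /= !mulrA mulVf ?pnatr_eq0 // mul1r expr1.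
Qed.

Lemma is_derive_affine (c d : R) : is_derive (0 : R) 1 (fun t => c + t * d) d.
Proof.
have -> : (fun t => c + t * d) = cst c + id * cst d by apply/funext.
by apply: is_derive_eq; rewrite scaler0 !add0r /GRing.scale /= mulr1.
Qed.

Lemma is_derive_comp_affine (phi : R -> R) (c d : R) : derivable phi c 1 ->
  is_derive (0 : R) 1 (fun t => phi (c + t * d)) (derive1 phi c * d).
Proof.
move=> /derivableP phi'c; rewrite derive1E.
apply: (is_derive1_comp (g := fun t => c + t * d)); last exact: is_derive_affine.
by rewrite /= mul0r addr0.
Qed.

End derivatives.

Section gradients.
Variables (R : realType) (k0 k : nat) (phi : R -> R).
Implicit Types (x : 'cV[R]_k0) (A : 'M[R]_(k0, k)) (B : 'M[R]_(k, k0)).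

Definition residual x A B : 'cV[R]_k0 := x - net phi A B x.

Lemma gradA_eq x A B :
  gradA phi x A B = - (residual x A B *m (phiv phi (B *m x))^T).
Proof.
apply/matrixP => i j; rewrite !mxE.
set r := residual x A B; set p := phiv phi (B *m x).
have -> : (fun t => loss phi x (A + t *: delta_mx i j) B) =
    fun t => 2^-1 * \sum_m (r m 0 + t * - (delta_mx i j *m p) m 0) ^+ 2.
  apply/funext => t; rewrite /loss /sqnorm; congr (_ * _).
  apply: eq_bigr => m _; congr (_ ^+ 2).
  by rewrite /r /residual /net mulmxDl -scalemxAl !mxE mulrN opprD addrA.
rewrite (derive1_half_sum_sqr (fun m => is_derive_affine _ _)).
rewrite big_ord1 [p^T _ _]mxE (bigD1 i) //= big1 ?addr0 => [|m /negbTE mi].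
  by rewrite mul_delta_mxE eqxx mul0r addr0 mul1r mulrN.
by rewrite mul_delta_mxE mi !mul0r oppr0 mulr0.
Qed.

Lemma gradB_eq x A B : (forall t, derivable phi t 1) ->
  gradB phi x A B = - (\col_i ((A^T *m residual x A B) i 0 *
                               derive1 phi ((B *m x) i 0)) *m x^T).
Proof.
move=> phi_diff; apply/matrixP => i j; rewrite !mxE.
set r := residual x A B; set c := B *m x; set d := delta_mx i j *m x.
set u := fun m => cst (x m 0) - \sum_l A m l \*: (fun t => phi (c l 0 + t * d l 0)).
have -> : (fun t => loss phi x A (B + t *: delta_mx i j)) =
    fun t => 2^-1 * \sum_m u m t ^+ 2.
  apply/funext => t; rewrite /loss /sqnorm; congr (_ * _).
  apply: eq_bigr => m _; congr (_ ^+ 2).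
  rewrite /u /net mulmxDl -scalemxAl -/c -/d !mxE /= fct_sumE; congr (_ - _).
  by apply: eq_bigr => l _; rewrite !mxE.
have u_du m : is_derive (0 : R) 1 (u m)
    (0 - \sum_l A m l *: (derive1 phi (c l 0) * d l 0)).
  apply: is_deriveB; apply: is_derive_sum => l.
  exact/is_deriveZ/is_derive_comp_affine.
rewrite (derive1_half_sum_sqr u_du).
have u0 m : u m 0 = r m 0.
  rewrite /u /= fct_sumE /r /residual /net [RHS]mxE [in RHS]mxE mxE.
  congr (_ - _); apply: eq_bigr => l _.
  by rewrite /= mul0r addr0 /phiv [in RHS]mxE.
have du_sum m : \sum_l A m l *: (derive1 phi (c l 0) * d l 0) =
    A m i * (derive1 phi (c i 0) * x j 0).
  rewrite (bigD1 i) //= big1 ?addr0 => [|l /negbTE li].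
    by rewrite /d mul_delta_mxE eqxx mul1r.
  by rewrite /d mul_delta_mxE li !mul0r /GRing.scale /= !mulr0.
rewrite big_ord1 !mxE !mulr_suml -sumrN; apply: eq_bigr => m _.
by rewrite u0 du_sum sub0r !mxE; ring.
Qed.

End gradients.

Section limits.
Variable R : realType.

Lemma cvg_mulmx_entry p m n q (P : 'M[R]_(p, m)) (Q : 'M[R]_(n, q))
    (M : nat -> 'M[R]_(m, n)) (L : 'M[R]_(m, n)) :
  (forall i j, (fun t => (M t i j : R^o)) @ \oo --> (L i j : R^o)) ->
  forall i j, (fun t => ((P *m M t *m Q) i j : R^o)) @ \oo -->
              ((P *m L *m Q) i j : R^o).
Proof.
move=> ML i j; rewrite mxE; under eq_cvg do rewrite mxE.
apply: (cvg_big (@add_continuous R^o)) => // l _; apply: cvgMr_tmp.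
rewrite mxE; under eq_cvg do rewrite mxE.
apply: (cvg_big (@add_continuous R^o)) => // l' _; apply: cvgMl_tmp.
exact: ML.
Qed.

Lemma lim_mulmx_fixed m n (P : 'M[R]_m) (Q : 'M[R]_n)
    (M : nat -> 'M[R]_(m, n)) (L : 'M[R]_(m, n)) :
  (forall t, M t = P *m M t *m Q) ->
  (forall i j, (fun t => (M t i j : R^o)) @ \oo --> (L i j : R^o)) ->
  L = P *m L *m Q.
Proof.
move=> MPQ ML; apply/matrixP => i j; apply: (cvg_unique _ (ML i j)) => //.
rewrite /= [in X in X @ _](funext MPQ).
exact: cvg_mulmx_entry.
Qed.

Lemma final_weights_fixed k0 k (P Q : 'M[R]_k0)
    (Ah : nat -> 'M[R]_(k0, k)) (Bh : nat -> 'M[R]_(k, k0)) Ainf Binf :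
  (forall t, Ah t = P *m Ah t /\ Bh t = Bh t *m Q) ->
  final_weights Ah Bh Ainf Binf -> Ainf = P *m Ainf /\ Binf = Binf *m Q.
Proof.
move=> fixed [[T [-> ->]] | [cvgA cvgB]]; first exact: fixed.
split.
  rewrite -[RHS]mulmx1; apply: lim_mulmx_fixed cvgA => t.
  by rewrite mulmx1; exact: (fixed t).1.
rewrite -[RHS]mul1mx mulmxA; apply: lim_mulmx_fixed cvgB => t.
by rewrite -mulmxA mul1mx; exact: (fixed t).2.
Qed.

End limits.

Section rank_one.
Variables (R : realType) (k0 k : nat) (phi : R -> R) (x : 'cV[R]_k0).
Hypothesis unit_x : sqnorm x = 1.

Lemma trmx_unit_mul : x^T *m x = 1%:M.
Proof. by rewrite [LHS]mx11_scalar -sqnorm_trmx unit_x. Qed.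

Lemma proj_unit_fix : x *m x^T *m x = x.
Proof. by rewrite -mulmxA trmx_unit_mul mulmx1. Qed.

Lemma gradA_proj (A : 'M[R]_(k0, k)) (B : 'M[R]_(k, k0)) :
  A = x *m x^T *m A -> gradA phi x A B = x *m x^T *m gradA phi x A B.
Proof.
move=> PA; have Pr : x *m x^T *m residual phi x A B = residual phi x A B.
  by rewrite /residual /net mulmxBr proj_unit_fix !mulmxA -PA.
by rewrite gradA_eq mulmxN mulmxA Pr.
Qed.

Lemma gradB_proj (A : 'M[R]_(k0, k)) (B : 'M[R]_(k, k0)) :
  (forall t, derivable phi t 1) ->
  gradB phi x A B = gradB phi x A B *m (x *m x^T).
Proof.
move=> phi_diff; rewrite gradB_eq // mulNmx -!mulmxA.
by rewrite (mulmxA x^T) trmx_unit_mul mul1mx.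
Qed.

Lemma gd_traj_proj (a0 b0 : 'cV[R]_k) gamma Ah Bh :
  (forall t, derivable phi t 1) ->
  Ah 0%N = x *m a0^T -> Bh 0%N = b0 *m x^T -> gd_traj phi x gamma Ah Bh ->
  forall n, Ah n = x *m x^T *m Ah n /\ Bh n = Bh n *m (x *m x^T).
Proof.
move=> phi_diff A0 B0 gd; elim=> [|n [PA QB]].
  rewrite A0 B0 mulmxA proj_unit_fix -!mulmxA.
  by rewrite (mulmxA x^T) trmx_unit_mul mul1mx.
have [-> ->] := gd n; split.
  by rewrite [RHS]mulmxBr -scalemxAr -PA -(gradA_proj _ PA).
by rewrite [RHS]mulmxBl -scalemxAl -QB -gradB_proj.
Qed.

Lemma loss_rank_one (a b : 'cV[R]_k) :
  loss phi x (x *m a^T) (b *m x^T) = 2^-1 * (1 - (a^T *m phiv phi b) 0 0) ^+ 2.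
Proof.
set s := (a^T *m phiv phi b) 0 0.
rewrite /loss; have -> : x - net phi (x *m a^T) (b *m x^T) x = (1 - s) *: x.
  rewrite /net -[b *m x^T *m x]mulmxA trmx_unit_mul mulmx1 -mulmxA.
  by rewrite [a^T *m _]mx11_scalar -/s mul_mx_scalar scalerBl scale1r.
by rewrite sqnormZ unit_x mulr1.
Qed.

End rank_one.

Theorem proposition3 (R : realType) (k0 k : nat) (phi : R -> R)
  (phi_diff : forall t : R, derivable phi t 1)
  (x : 'cV[R]_k0) (hx : sqnorm x = 1)
  (a0 b0 : 'cV[R]_k) (gamma : R) (hgamma : 0 < gamma)
  (Ah : nat -> 'M[R]_(k0, k)) (Bh : nat -> 'M[R]_(k, k0))
  (hA0 : Ah 0%N = x *m a0^T) (hB0 : Bh 0%N = b0 *m x^T)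
  (hgd : gd_traj phi x gamma Ah Bh)
  (Ainf : 'M[R]_(k0, k)) (Binf : 'M[R]_(k, k0))
  (hfin : final_weights Ah Bh Ainf Binf)
  (hzero : loss phi x Ainf Binf = 0) :
  exists a b : 'cV[R]_k,
    Ainf = x *m a^T /\ Binf = b *m x^T /\ (a^T *m phiv phi b) 0 0 = 1.
Proof.
have [PA QB] := final_weights_fixed (gd_traj_proj hx phi_diff hA0 hB0 hgd) hfin.
have eA : Ainf = x *m (Ainf^T *m x)^T by rewrite trmx_mul trmxK mulmxA -PA.
have eB : Binf = (Binf *m x) *m x^T by rewrite -mulmxA -QB.
exists (Ainf^T *m x), (Binf *m x); split=> //; split=> //.
rewrite eA eB loss_rank_one // in hzero; move/eqP: hzero.
by rewrite mulf_eq0 invr_eq0 pnatr_eq0 expf_eq0 subr_eq0 => /eqP.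
Qed.
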